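(* Let $G$ be a Tanner graph with largest right (check-node) degree $d_r^+$ and $t$-value $t$, so every irreducible lift-realizable pseudocodeword $p=(p_1,\dots,p_n)$ of $G$ has $0\le p_i\le t$. Then the smallest lift degree $m_{\min}$ needed to realize all irreducible pseudocodewords of $G$ satisfies \[ m_{\min}\le \max_{u_j}\frac{\sum_{v_i\in N(u_j)}p_i}{2}\le \frac{t\,d_r^+}{2},\] where the maximum is over all check nodes $u_j$ of $G$ and $N(u_j)$ is the set of variable-node neighbours of $u_j$ (for each irreducible pseudocodeword $p$, the middle quantity bounds the smallest degree of a lift realizing $p$).
   Context: A Tanner graph $G$ is a finite bipartite graph with variable nodes $v_1,\dots,v_n$ and check nodes $u_1,\dots,u_m$; it defines the binary code of all $x\in\{0,1\}^n$ such that every check node has an even number of neighbours $v_i$ with $x_i=1$. A degree-$\ell$ lift of $G$ replaces each node by a cloud of $\ell$ copies and each edge $(x,y)$ by a perfect matching between the clouds. A lift-realizable pseudocodeword $p\in\mathbb{Z}_{\ge0}^n$ is obtained from a codeword of the code of some finite lift by letting $p_i$ be the number of copies of $v_i$ assigned 1; $p$ is realized in that lift. A pseudocodeword is irreducible if it cannot be written as a sum of two or more nonzero codewords or pseudocodewords. The $t$-value of $G$ is the maximum component value of an irreducible pseudocodeword of $G$. *)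

From mathcomp Require Import all_boot all_fingroup.
Set Implicit Arguments. Unset Strict Implicit. Unset Printing Implicit Defensive.

(* A Tanner graph with variable nodes 'I_n and check nodes 'I_m is given by
   its adjacency relation adj : 'I_n -> 'I_m -> bool
   (adj i j  <=>  v_i -- u_j is an edge). *)

(* A degree-l lift: for every edge (v_i,u_j) a perfect matching between the
   clouds {(i,a) | a < l} and {(j,b) | b < l}, given as a permutation sigma i j
   of 'I_l: copy a of v_i is joined to copy (sigma i j a) of u_j.
   (Entries sigma i j for non-edges are irrelevant.) *)
Definition lift_perms (n m l : nat) := 'I_n -> 'I_m -> {perm 'I_l}.

(* x : assignment of bits to the copies of the variable nodes; it is a codeword
   of the lifted code iff every copy (j,b) of every check node has an even
   number of neighbours assigned 1. *)
Definition lift_codeword (n m l : nat) (adj : 'I_n -> 'I_m -> bool)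
    (sigma : lift_perms n m l) (x : 'I_n -> 'I_l -> bool) : Prop :=
  forall (j : 'I_m) (b : 'I_l),
    ~~ odd (\sum_(i < n | adj i j) \sum_(a < l | sigma i j a == b) nat_of_bool (x i a)).

Definition realized_in_degree (n m : nat) (adj : 'I_n -> 'I_m -> bool)
    (p : 'I_n -> nat) (l : nat) : Prop :=
  0 < l /\
  exists (sigma : lift_perms n m l) (x : 'I_n -> 'I_l -> bool),
    lift_codeword adj sigma x /\
    forall i : 'I_n, p i = #|[set a : 'I_l | x i a]|.

Definition pseudocodeword (n m : nat) (adj : 'I_n -> 'I_m -> bool)
    (p : 'I_n -> nat) : Prop :=
  exists l, realized_in_degree adj p l.

Definition nonzero_vec (n : nat) (p : 'I_n -> nat) : Prop := exists i, p i != 0.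

(* irreducible: a nonzero pseudocodeword that is not the sum of two or more
   nonzero pseudocodewords (codewords are the pseudocodewords of degree-1
   lifts, so they are included). *)
Definition irreducible_pcw (n m : nat) (adj : 'I_n -> 'I_m -> bool)
    (p : 'I_n -> nat) : Prop :=
  pseudocodeword adj p /\ nonzero_vec p /\
  ~ exists qs : seq ('I_n -> nat),
      1 < size qs /\
      (forall k, k < size qs ->
         pseudocodeword adj (nth (fun _ => 0) qs k) /\ nonzero_vec (nth (fun _ => 0) qs k)) /\
      (forall i, p i = \sum_(q <- qs) q i).

Definition is_t_value (n m : nat) (adj : 'I_n -> 'I_m -> bool) (t : nat) : Prop :=
  (forall p, irreducible_pcw adj p -> forall i, p i <= t) /\
  (exists p, irreducible_pcw adj p /\ exists i, p i = t).

Definition max_check_degree (n m : nat) (adj : 'I_n -> 'I_m -> bool) : nat :=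
  \max_(j < m) #|[set i : 'I_n | adj i j]|.

Definition max_check_sum (n m : nat) (adj : 'I_n -> 'I_m -> bool)
    (p : 'I_n -> nat) : nat :=
  \max_(j < m) \sum_(i < n | adj i j) p i.

From mathcomp Require Import all_boot all_fingroup zify.
Set Implicit Arguments. Unset Strict Implicit. Unset Printing Implicit Defensive.

(* In any lift realizing p, each copy of a check node u_j sees an even number
   of ones, so the check sum S_j = \sum_(v_i in N(u_j)) p_i is even, and a one
   at a copy of v_i must be matched by another one at the same check copy,
   whence 2 p_i <= S_j. Conversely, under these two conditions p is realized
   in every lift of degree l >= S_j / 2 (for all j): at u_j, lay the ones of
   the neighbours of u_j out consecutively and wrap them around the first
   S_j / 2 copies of u_j, so that each of these copies receives exactly two
   ones, coming from two distinct neighbours because p_i <= S_j / 2. Taking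
   l = max_j S_j / 2 gives the lift; since p is irreducible its entries are at
   most t, so S_j <= t deg(u_j) <= t d_r^+. *)

Lemma sum_perm_fiber l (s : {perm 'I_l}) (F : 'I_l -> nat) (b : 'I_l) :
  \sum_(a < l | s a == b) F a = F (s^-1 b)%g.
Proof.
rewrite (big_pred1 (s^-1 b)%g) // => a.
by apply/eqP/eqP => [<-|->]; rewrite ?permK ?permKV.
Qed.

Lemma card_set_perm l (s : {perm 'I_l}) (P : pred 'I_l) :
  #|[set a | P a]| = \sum_(b < l) P (s^-1 b)%g.
Proof.
rewrite -sum1_card (reindex_inj (@perm_inj _ s^-1%g)) big_mkcond /=.
by apply: eq_bigr => b _; rewrite inE; case: (P _).
Qed.

Lemma even_sum (I : Type) (r : seq I) (P : pred I) (F : I -> nat) :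
  (forall i, P i -> ~~ odd (F i)) -> ~~ odd (\sum_(i <- r | P i) F i).
Proof.
move=> evenF; apply: (big_ind (fun k => ~~ odd k)) => // a b.
by rewrite oddD => /negbTE-> /negbTE->.
Qed.

Lemma double_le_even_addl (c : bool) (e : nat) : ~~ odd (c + e) -> 2 * c <= c + e.
Proof. by case: c => //=; case: e. Qed.

Lemma sum_blocks (w F : nat -> nat) (N : nat) :
  \sum_(k < N) \sum_(a < w k) F (\sum_(k' < k) w k' + a)
  = \sum_(c < \sum_(k < N) w k) F c.
Proof.
elim: N => [|N IH]; first by rewrite !big_ord0.
by rewrite !big_ord_recr /= IH big_split_ord.
Qed.

Lemma even_sum_blocks_mod (w : nat -> nat) (N L b : nat) :
  \sum_(k < N) w k = L + L ->
  ~~ odd (\sum_(k < N) \sum_(a < w k) ((\sum_(k' < k) w k' + a) %% L == b : nat)).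
Proof.
move=> sum_w; rewrite (sum_blocks w (fun c => (c %% L == b : nat))) sum_w.
rewrite big_split_ord /=.
under [X in _ + X]eq_bigr => c _ do rewrite modnDl.
by rewrite addnn odd_double.
Qed.

Section RotatePrefix.
Variables l L : nat.
Hypothesis leLl : L <= l.

Definition rot_prefix (o : nat) (a : 'I_l) : 'I_l :=
  insubd a (if a < L then (o + a) %% L else val a).

Lemma rot_prefix_val o a :
  val (rot_prefix o a) = if a < L then (o + a) %% L else val a.
Proof.
rewrite /rot_prefix val_insubd; case: (ltnP a L) => aL; last by rewrite ltn_ord.
by rewrite (leq_trans _ leLl) // ltn_pmod // (leq_ltn_trans _ aL).
Qed.

Lemma rot_prefix_inj o : injective (rot_prefix o).
Proof.
have modL_lt (a : 'I_l) : a < L -> (o + a) %% L < L.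
  by move=> aL; rewrite ltn_pmod // (leq_ltn_trans _ aL).
move=> a a' /(congr1 val); rewrite !rot_prefix_val => eq_aa'; apply: val_inj.
case: ifP eq_aa' => aL; case: ifP => a'L //= eq_aa'.
- by apply/eqP; move/eqP: eq_aa'; rewrite eqn_modDl !modn_small.
- by have := modL_lt _ aL; rewrite eq_aa' a'L.
- by have := modL_lt _ a'L; rewrite -eq_aa' aL.
Qed.

Definition rot_perm (o : nat) : {perm 'I_l} := perm (@rot_prefix_inj o).

Lemma sum_rot_perm_fiber o k (b : 'I_l) : k <= L ->
  \sum_(a < l | rot_perm o a == b) (a < k : nat)
  = \sum_(a < k) ((o + a) %% L == b : nat).
Proof.
move=> le_kL; have le_kl := leq_trans le_kL leLl.
rewrite (big_ord_widen l (fun a => (o + a) %% L == b : nat) le_kl).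
rewrite big_mkcond [RHS]big_mkcond /=.
apply: eq_bigr => a _; rewrite permE -val_eqE rot_prefix_val.
case: (ltnP a k) => ak; last by case: ifP.
by rewrite (leq_trans ak le_kL); case: ifP.
Qed.

End RotatePrefix.

Section TannerGraph.
Variables n m : nat.
Variable adj : 'I_n -> 'I_m -> bool.

Definition check_sum (p : 'I_n -> nat) (j : 'I_m) : nat := \sum_(i < n | adj i j) p i.

Section Realization.
Variables (l : nat) (sigma : lift_perms n m l) (x : 'I_n -> 'I_l -> bool).
Hypothesis x_codeword : lift_codeword adj sigma x.

Definition copy_weight (j : 'I_m) (b : 'I_l) : nat :=
  \sum_(i < n | adj i j) x i ((sigma i j)^-1 b)%g.

Lemma copy_weight_even j b : ~~ odd (copy_weight j b).
Proof.
have := x_codeword j b; congr (~~ odd _); apply: eq_bigr => i _.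
exact: sum_perm_fiber.
Qed.

Lemma check_sum_copy_weights (p : 'I_n -> nat) j :
  (forall i, p i = #|[set a | x i a]|) ->
  check_sum p j = \sum_(b < l) copy_weight j b.
Proof.
move=> def_p; rewrite /check_sum /copy_weight [RHS]exchange_big /=.
by apply: eq_bigr => i _; rewrite def_p (card_set_perm (sigma i j)).
Qed.

End Realization.

Lemma realized_check_sum_even p l j :
  realized_in_degree adj p l -> ~~ odd (check_sum p j).
Proof.
case=> _ [sigma [x [x_cw def_p]]]; rewrite (check_sum_copy_weights sigma j def_p).
by apply: even_sum => b _; exact: copy_weight_even.
Qed.

Lemma realized_double_le_check_sum p l i j :
  realized_in_degree adj p l -> adj i j -> 2 * p i <= check_sum p j.
Proof.
case=> _ [sigma [x [x_cw def_p]]] adj_ij.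
rewrite (check_sum_copy_weights sigma j def_p) def_p (card_set_perm (sigma i j)).
rewrite big_distrr /=; apply: leq_sum => b _.
have := copy_weight_even x_cw j b; rewrite /copy_weight (bigD1 i) //=.
exact: double_le_even_addl.
Qed.

Lemma realized_of_check_sums p l :
  (forall i, exists j, adj i j) -> 0 < l ->
  (forall j, ~~ odd (check_sum p j)) ->
  (forall i j, adj i j -> 2 * p i <= check_sum p j) ->
  (forall j, (check_sum p j)./2 <= l) ->
  realized_in_degree adj p l.
Proof.
move=> adj_total l_gt0 even_S le_pS le_Sl; split=> //.
(* Indexing by nat lets the ones of the neighbours of u_j be laid out in blocks
   of sizes [w j 0], [w j 1], ..., the block of v_i starting at offset
   [\sum_(k < i) w j k]. *)
pose w j k := if insub k is Some i then (if adj i j then p i else 0) else 0.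
have check_sum_w j : check_sum p j = \sum_(k < n) w j k.
  by rewrite /check_sum big_mkcond; apply: eq_bigr => i _; rewrite /w valK.
have double_half j : (check_sum p j)./2 + (check_sum p j)./2 = check_sum p j.
  by rewrite addnn -[RHS]odd_double_half (negbTE (even_S j)).
have le_p_half i j : adj i j -> p i <= (check_sum p j)./2.
  by move=> adj_ij; have := le_pS i j adj_ij; have := double_half j; lia.
pose sigma : lift_perms n m l :=
  fun i j => rot_perm (le_Sl j) (\sum_(k < i) w j k).
exists sigma, (fun i a => a < p i); split; last first.
  move=> i; have [j adj_ij] := adj_total i.
  rewrite -sum1_card (eq_bigl (fun a : 'I_l => a < p i)) => [|a]; last by rewrite inE.
  have le_pl := leq_trans (le_p_half i j adj_ij) (le_Sl j).
  by rewrite -(big_ord_widen l (fun _ => 1) le_pl) sum1_card card_ord.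
move=> j b; rewrite big_mkcond /= (eq_bigr (fun i : 'I_n => \sum_(a < w j i)
    ((\sum_(k < i) w j k + a) %% (check_sum p j)./2 == b : nat))); last first.
  move=> i _; rewrite /w valK; case: ifP => adj_ij; last by rewrite big_ord0.
  by rewrite sum_rot_perm_fiber ?le_p_half.
by apply: even_sum_blocks_mod; rewrite -check_sum_w double_half.
Qed.

Lemma check_sum_le_degree p t j :
  (forall i, p i <= t) -> check_sum p j <= t * #|[set i | adj i j]|.
Proof.
move=> le_pt; apply: (@leq_trans (\sum_(i < n | adj i j) t)).
  by apply: leq_sum => i _; exact: le_pt.
by rewrite -sum1_card big_distrr /= muln1; under [leqRHS]eq_bigl do rewrite inE.
Qed.

End TannerGraph.

Theorem theorem5 (n m : nat) (adj : 'I_n -> 'I_m -> bool) (t : nat) :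
  (forall i : 'I_n, exists j : 'I_m, adj i j) ->
  is_t_value adj t ->
  forall p : 'I_n -> nat, irreducible_pcw adj p ->
    (exists l, realized_in_degree adj p l /\ l * 2 <= max_check_sum adj p) /\
    max_check_sum adj p <= t * max_check_degree adj.
Proof.
move=> adj_total [le_t _] p p_irr; have [[l0 p_real] [[i0 p_i0] _]] := p_irr.
set M := max_check_sum adj p.
have le_SM j : check_sum adj p j <= M := leq_bigmax (F := check_sum adj p) j.
split.
  exists M./2; split; last by rewrite muln2 -[leqRHS]odd_double_half leq_addl.
  apply: realized_of_check_sums => // [||i j|j].
  - have [j adj_i0j] := adj_total i0.
    have := realized_double_le_check_sum p_real adj_i0j; have := le_SM j.
    have := odd_double_half M; move: p_i0; lia.
  - by move=> j; exact: realized_check_sum_even p_real.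
  - exact: realized_double_le_check_sum p_real.
  - exact: half_leq (le_SM j).
apply/bigmax_leqP => j _; apply: leq_trans (check_sum_le_degree adj j (le_t p p_irr)) _.
by rewrite leq_mul2l (leq_bigmax (F := fun j => #|[set i | adj i j]|)) orbT.
Qed.
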